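(* Let $L>0$, $g>0$, $\alpha^2>0$ and let $\mathbf G(x,y)=\frac{1}{4\pi}\log\left(\frac{\cos(x/L)-\cosh(y/L)}{\cos(x/L)-\cosh((y-2)/L)}\right)$ on $\mathbb{R}\times(-\infty,1)$. Let $c_1$ be the first component of $\nabla^\perp\bigl(\mathbf G-\Gamma\bigr)(0,0)$, and let \[ \eta_*=-(g-\alpha^2\partial_x^2)^{-1}\left(\chi-\frac{1}{2\pi L}\int_{-\pi L}^{\pi L}\chi\,dx\right),\qquad\chi(x)=c_1\mathbf G_y(x,1)+\tfrac12\mathbf G_y(x,1)^2. \] Then \[ c_1=-\frac{1}{4\pi L}\coth(1/L),\qquad \eta_*(x)=-\frac{1}{4\pi^2}\sum_{n=1}^\infty\frac{n}{gL^2+\alpha^2n^2}e^{-n/L}\cos(nx/L). \]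
   Context: $\Gamma(x,y)=\frac{1}{4\pi}\log(x^2+y^2)$ and $\nabla^\perp f=(-f_y,f_x)$; $\mathbf G-\Gamma$ extends harmonically to $(0,0)$. $(g-\alpha^2\partial_x^2)^{-1}$ acts on $2\pi L$-periodic mean-zero functions as the Fourier multiplier sending $\cos(nx/L)$ to $(g+\alpha^2n^2/L^2)^{-1}\cos(nx/L)$. Here $c_1$ and $\eta_*$ are the leading-order wave speed and surface profile of the small-amplitude $2\pi L$-periodic gravity-capillary waves on infinite depth with a point vortex at $(0,0)$ below the undisturbed surface $y=1$. *)

From Stdlib Require Import Reals Lra.
From Coquelicot Require Import Coquelicot.
Open Scope R_scope.

Definition Gam (x y : R) : R := / (4 * PI) * ln (x ^ 2 + y ^ 2).

Definition Gf (L x y : R) : R :=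
  / (4 * PI) * ln ((cos (x / L) - cosh (y / L)) / (cos (x / L) - cosh ((y - 2) / L))).

Definition Hext (L x y : R) : R :=
  if Req_EM_T x 0 then
    if Req_EM_T y 0 then real (Lim (fun t => Gf L 0 t - Gam 0 t) 0)
    else Gf L x y - Gam x y
  else Gf L x y - Gam x y.

(* c_1 = first component of grad^perp (G - Gamma)(0,0) = - d/dy (G - Gamma)(0,0). *)
Definition c1_speed (L : R) : R := - Derive (fun y => Hext L 0 y) 0.

Definition Gy1 (L x : R) : R := Derive (fun y => Gf L x y) 1.

Definition chi (L x : R) : R := c1_speed L * Gy1 L x + / 2 * (Gy1 L x) ^ 2.

Definition fcos (L : R) (f : R -> R) (n : nat) : R :=
  / (PI * L) * RInt (fun t => f t * cos (INR n * t / L)) (- PI * L) (PI * L).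
Definition fsin (L : R) (f : R -> R) (n : nat) : R :=
  / (PI * L) * RInt (fun t => f t * sin (INR n * t / L)) (- PI * L) (PI * L).

(* (g - alpha^2 d_x^2)^{-1} on 2 pi L-periodic mean-zero functions, as the
   Fourier multiplier cos(nx/L) |-> (g + alpha^2 n^2/L^2)^{-1} cos(nx/L)
   (and likewise for sin(nx/L)); the n = 0 mode is absent (mean zero). *)
Definition invOp (L g alpha2 : R) (f : R -> R) (x : R) : R :=
  Series (fun n => if Nat.eqb n 0 then 0 else
    (fcos L f n * cos (INR n * x / L) + fsin L f n * sin (INR n * x / L))
    / (g + alpha2 * INR n ^ 2 / L ^ 2)).

Definition eta_star (L g alpha2 : R) (x : R) : R :=
  let m := / (2 * PI * L) * RInt (chi L) (- PI * L) (PI * L) in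
  - invOp L g alpha2 (fun t => chi L t - m) x.

From Stdlib Require Import Reals Lra.
From Coquelicot Require Import Coquelicot.
Open Scope R_scope.

(* Near the origin, [G(0,y) - Gamma(0,y)] is [1/(4 pi)] times
   [ln ((cosh (y/L) - 1) / y^2) - ln (cosh ((y-2)/L) - 1)]; the first logarithm moves only by
   O(y^2) away from 0, so [c_1] comes from the second one alone.  On the surface,
   [G_y(x,1) = sinh(1/L) / (2 pi L) * P x] with [P x = 1 / (cosh(1/L) - cos(x/L))], so [chi] is a
   quadratic polynomial in [P].  Multiplying by [cosh(1/L) - cos(x/L)] turns the cosine moments
   of [P] and [P^2] into solutions of a three-term recurrence with characteristic roots
   [e^(-1/L)] and [e^(1/L)]; being bounded, they are the decaying solutions
   [2 pi L e^(-n/L) / sinh(1/L)] and [2 pi L e^(-n/L) (n + coth(1/L)) / sinh(1/L)^2].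
   The [coth] part of the second cancels the [c_1] term of [chi], leaving [n e^(-n/L)];
   the sine coefficients vanish because [chi] is even. *)

Lemma nonneg_of_derive_nonneg (f df : R -> R) :
  f 0 = 0 -> (forall x, is_derive f x (df x)) -> (forall x, 0 <= x -> 0 <= df x) ->
  forall x, 0 <= x -> 0 <= f x.
Proof.
  intros f0 Hd Hdf x Hx.
  destruct (MVT_gen f 0 x df) as [c [Hc Hmvt]].
  - intros y _; apply Hd.
  - intros y _; apply derivable_continuous_pt; exists (df y); apply is_derive_Reals, Hd.
  - rewrite Rmin_left in Hc by lra. rewrite f0 in Hmvt.
    assert (0 <= df c * (x - 0)) by (apply Rmult_le_pos; [apply Hdf |]; lra).
    lra.
Qed.

Lemma cosh_ge_1 u : 1 <= cosh u.
Proof.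
  unfold cosh. rewrite exp_Ropp. pose proof (exp_pos u). set (E := exp u) in *.
  apply Rminus_le_0.
  replace ((E + / E) / 2 - 1) with ((E - 1) ^ 2 / (2 * E)) by (field; lra).
  apply Rmult_le_pos; [apply pow2_ge_0 | left; apply Rinv_0_lt_compat; lra].
Qed.

Lemma cosh_opp u : cosh (- u) = cosh u.
Proof. unfold cosh. rewrite Ropp_involutive. lra. Qed.

Lemma sinh_ge_id u : 0 <= u -> u <= sinh u.
Proof.
  intro Hu. enough (0 <= sinh u - u) by lra. revert u Hu.
  apply (nonneg_of_derive_nonneg _ (fun u => cosh u - 1)).
  - rewrite sinh_0. lra.
  - intro x. unfold sinh, cosh. auto_derive; auto. field.
  - intros x _. pose proof (cosh_ge_1 x). lra.
Qed.

Lemma cosh_sub_1_ge u : 0 <= u -> u ^ 2 / 2 <= cosh u - 1.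
Proof.
  intro Hu. enough (0 <= cosh u - 1 - u ^ 2 / 2) by lra. revert u Hu.
  apply (nonneg_of_derive_nonneg _ (fun u => sinh u - u)).
  - rewrite cosh_0. lra.
  - intro x. unfold sinh, cosh. auto_derive; auto. field.
  - intros x Hx. pose proof (sinh_ge_id x Hx). lra.
Qed.

Lemma sinh_le_mul_cosh u : 0 <= u -> sinh u <= u * cosh u.
Proof.
  intro Hu. enough (0 <= u * cosh u - sinh u) by lra. revert u Hu.
  apply (nonneg_of_derive_nonneg _ (fun u => u * sinh u)).
  - rewrite sinh_0. lra.
  - intro x. unfold sinh, cosh. auto_derive; auto. field.
  - intros x Hx. pose proof (sinh_ge_id x Hx). nra.
Qed.

Lemma cosh_sub_1_le u : 0 <= u -> cosh u - 1 <= u ^ 2 / 2 * cosh u.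
Proof.
  intro Hu. enough (0 <= u ^ 2 / 2 * cosh u - (cosh u - 1)) by lra. revert u Hu.
  apply (nonneg_of_derive_nonneg _ (fun u => (u * cosh u - sinh u) + u ^ 2 / 2 * sinh u)).
  - rewrite cosh_0. lra.
  - intro x. unfold sinh, cosh. auto_derive; auto. field.
  - intros x Hx. pose proof (sinh_ge_id x Hx). pose proof (sinh_le_mul_cosh x Hx).
    assert (0 <= x ^ 2 / 2 * sinh x) by (apply Rmult_le_pos; nra).
    lra.
Qed.

Lemma cosh_sub_1_bounds u : u ^ 2 / 2 <= cosh u - 1 <= u ^ 2 / 2 * cosh u.
Proof.
  destruct (Rle_dec 0 u).
  - split; [apply cosh_sub_1_ge | apply cosh_sub_1_le]; assumption.
  - rewrite <- (cosh_opp u). replace (u ^ 2) with ((- u) ^ 2) by ring.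
    split; [apply cosh_sub_1_ge | apply cosh_sub_1_le]; lra.
Qed.

Lemma cosh_gt_1 u : u <> 0 -> 1 < cosh u.
Proof.
  intro Hu. pose proof (cosh_sub_1_bounds u) as [Hlow _].
  assert (0 < u ^ 2) by (apply pow2_gt_0; assumption). lra.
Qed.

Lemma cosh_le_3 u : Rabs u <= 1 -> cosh u <= 3.
Proof.
  intro Hu. apply Rabs_le_between in Hu. pose proof exp_le_3.
  assert (exp_le_e : forall v, v <= 1 -> exp v <= exp 1).
  { intros v Hv.
    destruct (Rle_lt_or_eq_dec v 1 Hv) as [Hlt | ->]; [left; apply exp_increasing |]; lra. }
  pose proof (exp_le_e u ltac:(lra)). pose proof (exp_le_e (- u) ltac:(lra)).
  unfold cosh. lra.
Qed.

Lemma is_derive_0_of_sq_bound (f : R -> R) (K d : R) :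
  0 < d -> (forall y, Rabs y <= d -> Rabs (f y - f 0) <= K * y ^ 2) -> is_derive f 0 0.
Proof.
  intros Hd Hf. apply is_derive_Reals. intros eps Heps.
  set (K' := Rabs K + 1).
  assert (HK' : 0 < K') by (unfold K'; pose proof (Rabs_pos K); lra).
  assert (Hdelta : 0 < Rmin d (eps / K')) by (apply Rmin_pos; [| apply Rdiv_lt_0_compat]; lra).
  exists (mkposreal _ Hdelta). intros h Hh0 Hh. simpl in Hh.
  pose proof (Rmin_l d (eps / K')). pose proof (Rmin_r d (eps / K')).
  rewrite Rplus_0_l, Rminus_0_r.
  assert (Habs : 0 < Rabs h) by (apply Rabs_pos_lt; assumption).
  assert (Hbound : Rabs (f h - f 0) <= K' * Rabs h * Rabs h).
  { eapply Rle_trans; [apply Hf; lra |].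
    rewrite <- pow2_abs. pose proof (Rle_abs K). unfold K'. nra. }
  unfold Rdiv. rewrite Rabs_mult, Rabs_inv.
  apply (Rmult_lt_reg_r (Rabs h)); [assumption |].
  rewrite Rmult_assoc, Rinv_l, Rmult_1_r by lra.
  apply Rle_lt_trans with (1 := Hbound).
  apply Rmult_lt_compat_r; [assumption |].
  assert (Hh' : Rabs h < eps / K') by lra.
  apply (Rmult_lt_compat_l K') in Hh'; [| assumption].
  replace (K' * (eps / K')) with eps in Hh' by (field; lra). lra.
Qed.

Lemma Rabs_lt_of_ball_0 (y : R) (eps : posreal) : ball 0 eps y -> Rabs y < eps.
Proof.
  unfold ball; simpl; unfold AbsRing_ball, abs, minus, plus, opp; simpl.
  rewrite Ropp_0, Rplus_0_r. auto.
Qed.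

Lemma RInt_odd (f : R -> R) (A : R) :
  (forall t, continuous f t) -> (forall t, f (- t) = - f t) -> RInt f (- A) A = 0.
Proof.
  intros Hc Hodd.
  assert (Hex : ex_RInt f (- A) A) by (apply (@ex_RInt_continuous R_CompleteNormedModule); auto).
  assert (Hflip : is_RInt f A (- A) (RInt f (- A) A)).
  { apply (is_RInt_ext (fun y => opp (f (- y)))).
    - intros y _. unfold opp; simpl. rewrite Hodd. ring.
    - apply (@is_RInt_comp_opp R_NormedModule).
      rewrite Ropp_involutive. exact (RInt_correct f (- A) A Hex). }
  apply (@is_RInt_unique R_CompleteNormedModule) in Hflip.
  rewrite <- (opp_RInt_swap f) in Hflip by exact Hex.
  unfold opp in Hflip; simpl in Hflip. lra.
Qed.

Lemma pow_mul_bounded_eq_0 (r D M : R) :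
  1 < r -> (forall n, Rabs (r ^ n * D) <= M) -> D = 0.
Proof.
  intros Hr HM. destruct (Req_dec D 0) as [| HD]; [assumption | exfalso].
  assert (HD' : 0 < Rabs D) by (apply Rabs_pos_lt; assumption).
  destruct (Pow_x_infinity r ltac:(rewrite Rabs_right; lra) (M / Rabs D + 1)) as [N HN].
  specialize (HN N (Nat.le_refl N)). specialize (HM N).
  rewrite Rabs_mult in HM.
  assert (Hbig : Rabs (r ^ N) * Rabs D >= (M / Rabs D + 1) * Rabs D)
    by (apply Rmult_ge_compat_r; lra).
  replace ((M / Rabs D + 1) * Rabs D) with (M + Rabs D) in Hbig by (field; lra).
  lra.
Qed.

Section BoundedRecurrence.

Variables c s : R.
Hypotheses (Hcs : c * c - s * s = 1) (Hs : 0 < s) (Hc : 0 < c).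

(* The characteristic roots of [u (n+2) = 2 c u (n+1) - u n] are [c - s < 1 < c + s];
   boundedness kills the growing mode. *)
Lemma bounded_recurrence_geometric (u : nat -> R) (M : R) :
  (forall n, c * u (S n) - (u (S (S n)) + u n) / 2 = 0) ->
  (forall n, Rabs (u n) <= M) -> forall n, u n = (c - s) ^ n * u 0%nat.
Proof.
  intros Hrec HM.
  set (q := c - s). set (r := c + s).
  assert (Hqr : q * r = 1) by (unfold q, r; lra).
  assert (Hr : 1 < r) by (unfold r; nra).
  assert (Hq : 0 < q) by (unfold q; nra).
  set (D := fun n => u (S n) - q * u n).
  assert (HD : forall n, D n = r ^ n * D 0%nat).
  { induction n as [| n IHn]; [simpl; ring |].
    assert (HDS : D (S n) = r * D n).
    { unfold D. replace (u (S (S n))) with (2 * c * u (S n) - u n) by (specialize (Hrec n); lra).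
      replace (2 * c) with (q + r) by (unfold q, r; ring).
      replace (u n) with (q * r * u n) at 1 by (rewrite Hqr; ring). ring. }
    rewrite HDS, IHn. simpl. ring. }
  assert (HD0 : D 0%nat = 0).
  { apply (pow_mul_bounded_eq_0 r (D 0%nat) ((1 + q) * M)); [assumption |].
    intro n. rewrite <- HD. unfold D.
    pose proof (HM (S n)). pose proof (HM n).
    eapply Rle_trans; [apply Rabs_triang |].
    rewrite Rabs_Ropp, Rabs_mult, (Rabs_right q) by lra. nra. }
  induction n as [| n IHn]; [simpl; ring |].
  assert (HDn : D n = 0) by (rewrite HD, HD0; ring). unfold D in HDn.
  simpl. rewrite Rmult_assoc, <- IHn. lra.
Qed.

Lemma bounded_recurrence_unique (f : nat -> R) (a : R) (u v : nat -> R) :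
  (forall n, c * u (S n) - (u (S (S n)) + u n) / 2 = f n) ->
  (forall n, c * v (S n) - (v (S (S n)) + v n) / 2 = f n) ->
  c * u 0%nat - u 1%nat = a -> c * v 0%nat - v 1%nat = a ->
  (exists M, forall n, Rabs (u n) <= M) -> (exists M, forall n, Rabs (v n) <= M) ->
  forall n, u n = v n.
Proof.
  intros Hu Hv Hu0 Hv0 [Mu HMu] [Mv HMv].
  set (d := fun n => u n - v n).
  assert (Hd : forall n, d n = (c - s) ^ n * d 0%nat).
  { apply (bounded_recurrence_geometric d (Mu + Mv)).
    - intro n. unfold d. specialize (Hu n). specialize (Hv n). lra.
    - intro n. unfold d. pose proof (Rabs_triang (u n) (- v n)) as Htri. rewrite Rabs_Ropp in Htri.
      pose proof (HMu n). pose proof (HMv n). unfold Rminus. lra. }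
  assert (Hd0 : d 0%nat = 0).
  { assert (Hd01 : c * d 0%nat - d 1%nat = 0) by (unfold d; lra).
    rewrite (Hd 1%nat) in Hd01. simpl in Hd01. nra. }
  intro n. enough (d n = 0) by (unfold d in *; lra).
  rewrite Hd, Hd0. ring.
Qed.

End BoundedRecurrence.

Lemma INR_mul_pow_le (q : R) (n : nat) : 0 < q < 1 -> INR n * q ^ n <= q / (1 - q).
Proof.
  intro Hq. set (r := / q).
  assert (Hr : 1 < r) by (unfold r; rewrite <- Rinv_1; apply Rinv_lt_contravar; lra).
  assert (Hbern : 1 + INR n * (r - 1) <= r ^ n).
  { clear -Hr. induction n as [| n IHn]; [simpl; lra |].
    rewrite S_INR. simpl. pose proof (pos_INR n).
    assert (0 <= r ^ n) by (apply pow_le; lra).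
    assert (0 <= INR n * ((r - 1) * (r - 1))) by (apply Rmult_le_pos; nra). nra. }
  assert (Hqn : q ^ n = / r ^ n) by (unfold r; rewrite pow_inv, Rinv_inv; reflexivity).
  assert (0 < r ^ n) by (apply pow_lt; lra).
  replace (q / (1 - q)) with (/ (r - 1)) by (unfold r; field; lra).
  rewrite Hqn. pose proof (pos_INR n).
  apply (Rmult_le_reg_r (r ^ n * (r - 1))); [nra |].
  field_simplify; lra.
Qed.

Lemma exp_opp_INR_div (n : nat) (a : R) : exp (- INR n / a) = (/ exp (/ a)) ^ n.
Proof.
  induction n as [| n IHn]; [simpl; unfold Rdiv; rewrite Ropp_0, Rmult_0_l; apply exp_0 |].
  replace (- INR (S n) / a) with (- INR n / a + - / a) by (rewrite S_INR; unfold Rdiv; ring).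
  rewrite exp_plus, IHn, exp_Ropp. simpl. ring.
Qed.

Lemma RInt_lin3 (f g h : R -> R) (a b x y z : R) :
  ex_RInt f a b -> ex_RInt g a b -> ex_RInt h a b ->
  RInt (fun t => x * f t + y * g t + z * h t) a b
  = x * RInt f a b + y * RInt g a b + z * RInt h a b.
Proof.
  intros Hf Hg Hh.
  rewrite (RInt_ext _ (fun t => plus (plus (scal x (f t)) (scal y (g t))) (scal z (h t))))
    by reflexivity.
  rewrite (@RInt_plus R_CompleteNormedModule), (@RInt_plus R_CompleteNormedModule),
    !(@RInt_scal R_CompleteNormedModule); try assumption.
  - reflexivity.
  - apply (@ex_RInt_scal R_CompleteNormedModule); assumption.
  - apply (@ex_RInt_scal R_CompleteNormedModule); assumption.
  - apply (@ex_RInt_plus R_CompleteNormedModule);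
      apply (@ex_RInt_scal R_CompleteNormedModule); assumption.
  - apply (@ex_RInt_scal R_CompleteNormedModule); assumption.
Qed.

Section Moments.

Variable L : R.

Definition moment (w : R -> R) (k : R) : R :=
  RInt (fun t => w t * cos (k * t / L)) (- PI * L) (PI * L).

Lemma moment_ext (w w' : R -> R) (k : R) : (forall t, w t = w' t) -> moment w k = moment w' k.
Proof. intro Hw. apply RInt_ext. intros t _. rewrite Hw. reflexivity. Qed.

Lemma moment_opp (w : R -> R) (k : R) : moment w (- k) = moment w k.
Proof.
  apply RInt_ext. intros t _. replace (- k * t / L) with (- (k * t / L)) by (unfold Rdiv; ring).
  rewrite cos_neg. reflexivity.
Qed.

Lemma ex_RInt_moment (w : R -> R) (k a b : R) :
  (forall t, continuous w t) -> ex_RInt (fun t => w t * cos (k * t / L)) a b.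
Proof.
  intro Hw. apply (@ex_RInt_continuous R_CompleteNormedModule). intros t _.
  apply (@continuous_mult R_UniformSpace R_AbsRing); [apply Hw |].
  apply (@ex_derive_continuous R_AbsRing R_NormedModule). auto_derive. exact I.
Qed.

Lemma moment_mul_shift (w : R -> R) (c k : R) : (forall t, continuous w t) ->
  moment (fun t => w t * (c - cos (t / L))) k
  = c * moment w k - (moment w (k + 1) + moment w (k - 1)) / 2.
Proof.
  intro Hw. unfold moment.
  rewrite (RInt_ext (fun t => w t * (c - cos (t / L)) * cos (k * t / L))
    (fun t => c * (w t * cos (k * t / L)) + (- / 2) * (w t * cos ((k + 1) * t / L))
              + (- / 2) * (w t * cos ((k - 1) * t / L)))).
  - rewrite RInt_lin3 by (apply ex_RInt_moment; assumption). field.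
  - intros t _.
    replace ((k + 1) * t / L) with (k * t / L + t / L) by (unfold Rdiv; ring).
    replace ((k - 1) * t / L) with (k * t / L - t / L) by (unfold Rdiv; ring).
    rewrite cos_plus, cos_minus. simpl. field.
Qed.

Lemma moment_recurrence_S (w : R -> R) (c : R) (n : nat) : (forall t, continuous w t) ->
  c * moment w (INR (S n)) - (moment w (INR (S (S n))) + moment w (INR n)) / 2
  = moment (fun t => w t * (c - cos (t / L))) (INR (S n)).
Proof.
  intro Hw. rewrite moment_mul_shift by exact Hw.
  replace (INR (S n) + 1) with (INR (S (S n))) by (rewrite (S_INR (S n)); reflexivity).
  replace (INR (S n) - 1) with (INR n) by (rewrite S_INR; ring).
  reflexivity.
Qed.

Lemma moment_recurrence_0 (w : R -> R) (c : R) : (forall t, continuous w t) ->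
  c * moment w (INR 0) - moment w (INR 1) = moment (fun t => w t * (c - cos (t / L))) (INR 0).
Proof.
  intro Hw. rewrite moment_mul_shift by exact Hw. simpl INR.
  replace (0 - 1) with (- (1)) by ring. rewrite moment_opp, Rplus_0_l. field.
Qed.

Lemma moment_lin3 (f g h : R -> R) (x y z k : R) :
  (forall t, continuous f t) -> (forall t, continuous g t) -> (forall t, continuous h t) ->
  moment (fun t => x * f t + y * g t + z * h t) k
  = x * moment f k + y * moment g k + z * moment h k.
Proof.
  intros Hf Hg Hh. unfold moment. rewrite <- RInt_lin3 by (apply ex_RInt_moment; assumption).
  apply RInt_ext. intros t _. simpl. ring.
Qed.

Hypothesis hL : 0 < L.

Lemma moment_bound (w : R -> R) (B k : R) : (forall t, continuous w t) ->
  (forall t, Rabs (w t) <= B) -> Rabs (moment w k) <= 2 * PI * L * B.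
Proof.
  intros Hw HB. pose proof PI_RGT_0. unfold moment.
  replace (2 * PI * L * B) with ((PI * L - - PI * L) * B) by ring.
  apply abs_RInt_le_const; [nra | apply ex_RInt_moment; assumption |].
  intros t _. rewrite Rabs_mult. pose proof (HB t). pose proof (Rabs_pos (w t)).
  assert (Rabs (cos (k * t / L)) <= 1) by (apply Rabs_le, COS_bound). nra.
Qed.

Lemma moment_one_0 : moment (fun _ => 1) 0 = 2 * PI * L.
Proof.
  unfold moment. rewrite (RInt_ext _ (fun _ => 1)).
  - rewrite (@RInt_const R_CompleteNormedModule). unfold scal; simpl; unfold mult; simpl. ring.
  - intros t _. replace (0 * t / L) with 0 by (unfold Rdiv; ring). rewrite cos_0. apply Rmult_1_l.
Qed.

Lemma moment_one_S (n : nat) : moment (fun _ => 1) (INR (S n)) = 0.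
Proof.
  assert (Hn : 0 < INR (S n)) by apply lt_0_INR, Nat.lt_0_succ.
  set (k := INR (S n)) in *. unfold moment.
  apply (@is_RInt_unique R_CompleteNormedModule).
  apply (is_RInt_ext (fun t => cos (k * t / L))); [intros; symmetry; apply Rmult_1_l |].
  replace 0 with (minus (L / k * sin (k * (PI * L) / L)) (L / k * sin (k * (- PI * L) / L))).
  - apply (@is_RInt_derive R_CompleteNormedModule (fun t => L / k * sin (k * t / L))).
    + intros t _. auto_derive; [exact I |]. unfold Rdiv. field. lra.
    + intros t _. apply (@ex_derive_continuous R_AbsRing R_NormedModule). auto_derive. exact I.
  - replace (k * (PI * L) / L) with (INR (S n) * PI) by (unfold k; field; lra).
    replace (k * (- PI * L) / L) with (- (INR (S n) * PI)) by (unfold k; field; lra).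
    assert (Hsin : sin (INR (S n) * PI) = 0).
    { apply sin_eq_0_1. exists (Z.of_nat (S n)). rewrite INR_IZR_INZ. reflexivity. }
    rewrite sin_neg, Hsin. unfold minus, plus, opp; simpl. ring.
Qed.

End Moments.

Section Green.

Variable L : R.
Hypothesis hL : 0 < L.

Local Notation E := (exp (/ L)).
Local Notation c := (cosh (1 / L)).
Local Notation s := (sinh (1 / L)).

Lemma exp_inv_gt_1 : 1 < E.
Proof. rewrite <- exp_0. apply exp_increasing, Rinv_0_lt_compat, hL. Qed.

Lemma cosh_inv_eq : c = (E + / E) / 2.
Proof. unfold cosh. rewrite exp_Ropp. rewrite Rdiv_1_l. reflexivity. Qed.

Lemma sinh_inv_eq : s = (E - / E) / 2.
Proof. unfold sinh. rewrite exp_Ropp. rewrite Rdiv_1_l. reflexivity. Qed.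

Lemma cosh_inv_gt_1 : 1 < c.
Proof. apply cosh_gt_1. rewrite Rdiv_1_l. apply Rinv_neq_0_compat. lra. Qed.

Lemma sinh_inv_pos : 0 < s.
Proof.
  rewrite sinh_inv_eq. pose proof exp_inv_gt_1.
  assert (/ E < 1) by (rewrite <- Rinv_1; apply Rinv_lt_contravar; lra).
  lra.
Qed.

Lemma cosh_sq_sub_sinh_sq : c * c - s * s = 1.
Proof. rewrite cosh_inv_eq, sinh_inv_eq. pose proof exp_inv_gt_1. field. lra. Qed.

Definition poisson (t : R) : R := / (c - cos (t / L)).

Lemma cosh_inv_sub_cos_pos t : 0 < c - cos (t / L).
Proof. pose proof cosh_inv_gt_1. pose proof (COS_bound (t / L)). lra. Qed.

Lemma poisson_mul t : poisson t * (c - cos (t / L)) = 1.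
Proof. unfold poisson. pose proof (cosh_inv_sub_cos_pos t). field. lra. Qed.

Lemma poisson_bounds t : 0 < poisson t <= / (c - 1).
Proof.
  unfold poisson. pose proof cosh_inv_gt_1. pose proof (COS_bound (t / L)).
  split; [apply Rinv_0_lt_compat | apply Rinv_le_contravar]; lra.
Qed.

Lemma poisson_opp t : poisson (- t) = poisson t.
Proof.
  unfold poisson. replace (- t / L) with (- (t / L)) by (unfold Rdiv; ring).
  rewrite cos_neg. reflexivity.
Qed.

Lemma ex_derive_poisson t : ex_derive poisson t.
Proof. unfold poisson. pose proof (cosh_inv_sub_cos_pos t). auto_derive. lra. Qed.

Lemma Gy1_eq x : Gy1 L x = s / (2 * PI * L) * poisson x.
Proof.
  unfold Gy1, Gf. apply is_derive_unique.
  pose proof (cosh_inv_sub_cos_pos x) as Hpos. pose proof exp_inv_gt_1. pose proof PI_RGT_0.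
  unfold poisson. rewrite cosh_inv_eq, sinh_inv_eq in *.
  assert (Hm : (1 + - (2)) * / L = - / L) by (field; lra).
  assert (H1 : 1 * / L = / L) by (field; lra).
  unfold cosh. auto_derive; rewrite Hm, H1, Ropp_involutive, exp_Ropp, (Rplus_comm (/ E)).
  - assert (Hne : cos (x / L) + - ((E + / E) * / 2) <> 0) by lra.
    split; [exact Hne | split; [| exact I]]. rewrite Rinv_r by exact Hne. lra.
  - assert (Hden : 0 < E * E + 1 - cos (x / L) * (E * 2)).
    { replace (E * E + 1 - cos (x / L) * (E * 2)) with (2 * E * ((E + / E) / 2 - cos (x / L)))
        by (field; lra).
      apply Rmult_lt_0_compat; lra. }
    field. repeat split; lra.
Qed.

Definition cosh_quot (y : R) : R :=
  if Req_EM_T y 0 then / (2 * L ^ 2) else (cosh (y / L) - 1) / y ^ 2.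

Lemma ln_cosh_quot_sq_bound y :
  Rabs y <= L -> Rabs (ln (cosh_quot y) - ln (cosh_quot 0)) <= 3 / (2 * L ^ 2) * y ^ 2.
Proof.
  intro Hy. assert (HL2 : 0 < 2 * L ^ 2) by (pose proof (pow_lt L 2 hL); lra).
  unfold cosh_quot. destruct (Req_EM_T 0 0) as [_ | ]; [| congruence].
  destruct (Req_EM_T y 0) as [-> | Hy0].
  { rewrite Rminus_diag, Rabs_R0. apply Rmult_le_pos; [| apply pow2_ge_0].
    apply Rlt_le, Rdiv_lt_0_compat; lra. }
  set (u := y / L).
  assert (Hyu : y = u * L) by (unfold u; field; lra).
  assert (Hu : Rabs u <= 1).
  { unfold u, Rdiv. rewrite Rabs_mult, Rabs_inv, (Rabs_right L) by lra.
    apply (Rmult_le_reg_r L); [exact hL |]. field_simplify; lra. }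
  assert (Hu0 : u <> 0) by (intro Hu0; apply Hy0; rewrite Hyu, Hu0; ring).
  assert (Hu2 : 0 < u ^ 2) by (apply pow2_gt_0, Hu0).
  pose proof (cosh_sub_1_bounds u) as [Hlow Hup]. pose proof (cosh_le_3 u Hu).
  set (X := 2 * (cosh u - 1) / u ^ 2).
  assert (HXu : X * u ^ 2 = 2 * (cosh u - 1)) by (unfold X; field; exact Hu0).
  assert (HX1 : 1 <= X) by (apply (Rmult_le_reg_r (u ^ 2)); lra).
  assert (HXc : X <= cosh u) by (apply (Rmult_le_reg_r (u ^ 2)); lra).
  replace ((cosh u - 1) / y ^ 2) with (X * / (2 * L ^ 2)) by (unfold X; rewrite Hyu; field; lra).
  rewrite ln_mult by (try apply Rinv_0_lt_compat; lra).
  replace (ln X + ln (/ (2 * L ^ 2)) - ln (/ (2 * L ^ 2))) with (ln X) by ring.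
  assert (Hln0 : 0 <= ln X) by (rewrite <- ln_1; apply ln_le; lra).
  assert (Hln1 : ln X <= X - 1).
  { pose proof (exp_ineq1_le (ln X)) as Hexp. rewrite exp_ln in Hexp; lra. }
  rewrite Rabs_right by lra. rewrite Hyu.
  replace (3 / (2 * L ^ 2) * (u * L) ^ 2) with (3 / 2 * u ^ 2) by (field; lra).
  nra.
Qed.

Lemma is_derive_ln_cosh_quot : is_derive (fun y => ln (cosh_quot y)) 0 0.
Proof. apply (is_derive_0_of_sq_bound _ (3 / (2 * L ^ 2)) L hL), ln_cosh_quot_sq_bound. Qed.

Lemma is_derive_ln_cosh_shift : is_derive (fun y => ln (cosh ((y - 2) / L) - 1)) 0 (- (c / s) / L).
Proof.
  rewrite cosh_inv_eq, sinh_inv_eq. pose proof exp_inv_gt_1.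
  assert (HEE : 0 < E - / E) by (pose proof sinh_inv_pos; rewrite sinh_inv_eq in *; lra).
  unfold cosh. auto_derive; replace ((0 + - (2)) * / L) with (- / L + - / L) by (field; lra);
    rewrite Ropp_plus_distr, !Ropp_involutive, !exp_plus, !exp_Ropp.
  all: replace ((/ E * / E + E * E) * / 2 + - (1)) with ((E - / E) ^ 2 / 2) by (field; lra).
  - apply Rdiv_lt_0_compat; [apply pow2_gt_0 |]; lra.
  - field. repeat split; nra.
Qed.

Definition Hreg (y : R) : R := / (4 * PI) * (ln (cosh_quot y) - ln (cosh ((y - 2) / L) - 1)).

Lemma is_derive_Hreg : is_derive Hreg 0 (/ (4 * PI * L) * (c / s)).
Proof.
  pose proof PI_RGT_0. pose proof sinh_inv_pos.
  replace (/ (4 * PI * L) * (c / s)) with (/ (4 * PI) * (0 - (- (c / s) / L)))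
    by (field; repeat split; lra).
  apply is_derive_scal,
    (is_derive_minus (fun y => ln (cosh_quot y)) (fun y => ln (cosh ((y - 2) / L) - 1))).
  - exact is_derive_ln_cosh_quot.
  - exact is_derive_ln_cosh_shift.
Qed.

Lemma Gf_sub_Gam_eq y : y <> 0 -> Rabs y < 1 -> Gf L 0 y - Gam 0 y = Hreg y.
Proof.
  intros Hy0 Hy1. pose proof PI_RGT_0. apply Rabs_def2 in Hy1.
  assert (Hdiv_neq_0 : forall z, z <> 0 -> z / L <> 0).
  { intros z Hz. unfold Rdiv. apply Rmult_integral_contrapositive. split; [exact Hz |].
    apply Rinv_neq_0_compat. lra. }
  pose proof (cosh_gt_1 _ (Hdiv_neq_0 y Hy0)).
  pose proof (cosh_gt_1 _ (Hdiv_neq_0 (y - 2) ltac:(lra))).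
  assert (0 < y ^ 2) by (apply pow2_gt_0, Hy0).
  unfold Gf, Gam, Hreg, cosh_quot. destruct (Req_EM_T y 0) as [| _]; [contradiction |].
  replace (0 / L) with 0 by (field; lra). rewrite cos_0.
  replace ((1 - cosh (y / L)) / (1 - cosh ((y - 2) / L)))
    with ((cosh (y / L) - 1) / (cosh ((y - 2) / L) - 1)) by (field; lra).
  replace (0 ^ 2 + y ^ 2) with (y ^ 2) by ring.
  rewrite !ln_div by lra. ring.
Qed.

Lemma Hext_0_eq : Hext L 0 0 = Hreg 0.
Proof.
  unfold Hext. destruct (Req_EM_T 0 0) as [_ | ]; [| congruence].
  replace (Lim (fun t => Gf L 0 t - Gam 0 t) 0) with (Finite (Hreg 0)); [reflexivity |].
  symmetry. apply is_lim_unique, (is_lim_ext_loc Hreg).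
  - exists (mkposreal 1 Rlt_0_1). intros y Hy Hy0.
    symmetry. apply Gf_sub_Gam_eq; [exact Hy0 | exact (Rabs_lt_of_ball_0 _ _ Hy)].
  - apply is_lim_continuity, derivable_continuous_pt.
    exists (/ (4 * PI * L) * (c / s)). apply is_derive_Reals, is_derive_Hreg.
Qed.

Lemma is_derive_Hext : is_derive (fun y => Hext L 0 y) 0 (/ (4 * PI * L) * (c / s)).
Proof.
  apply (is_derive_ext_loc Hreg); [| exact is_derive_Hreg].
  exists (mkposreal 1 Rlt_0_1). intros y Hy.
  destruct (Req_EM_T y 0) as [-> | Hy0]; [symmetry; exact Hext_0_eq |].
  unfold Hext. destruct (Req_EM_T 0 0) as [_ | ]; [| congruence].
  destruct (Req_EM_T y 0) as [| _]; [contradiction |].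
  symmetry. apply Gf_sub_Gam_eq; [exact Hy0 | exact (Rabs_lt_of_ball_0 _ _ Hy)].
Qed.

Lemma c1_speed_eq : c1_speed L = - / (4 * PI * L) * (c / s).
Proof.
  unfold c1_speed.
  replace (Derive (fun y => Hext L 0 y) 0) with (/ (4 * PI * L) * (c / s))
    by (symmetry; apply is_derive_unique, is_derive_Hext).
  ring.
Qed.

Lemma continuous_poisson t : continuous poisson t.
Proof. apply (@ex_derive_continuous R_AbsRing R_NormedModule), ex_derive_poisson. Qed.

Lemma continuous_poisson_sq t : continuous (fun t => poisson t ^ 2) t.
Proof.
  apply (continuous_ext (fun t => poisson t * poisson t)); [intro; simpl; ring |].
  apply (@continuous_mult R_UniformSpace R_AbsRing); apply continuous_poisson.
Qed.

Lemma inv_exp_inv_bounds : 0 < / E < 1.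
Proof.
  pose proof exp_inv_gt_1. split; [apply Rinv_0_lt_compat; lra |].
  rewrite <- Rinv_1. apply Rinv_lt_contravar; lra.
Qed.

Lemma inv_exp_inv_pow_bounds n : 0 < (/ E) ^ n <= 1.
Proof.
  pose proof inv_exp_inv_bounds.
  split; [apply pow_lt | rewrite <- (pow1 n); apply pow_incr]; lra.
Qed.

Lemma moment_poisson n : moment L poisson (INR n) = (/ E) ^ n * (2 * PI * L / s).
Proof.
  pose proof exp_inv_gt_1. pose proof sinh_inv_pos. pose proof cosh_inv_gt_1.
  pose proof inv_exp_inv_bounds. pose proof PI_RGT_0.
  revert n. apply (bounded_recurrence_unique c s cosh_sq_sub_sinh_sq sinh_inv_pos ltac:(lra)
    (fun _ => 0) (2 * PI * L)).
  - intro n. rewrite moment_recurrence_S by exact continuous_poisson.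
    rewrite (moment_ext _ _ (fun _ => 1)) by exact poisson_mul. apply moment_one_S, hL.
  - intro n. rewrite cosh_inv_eq. simpl pow. field. lra.
  - rewrite moment_recurrence_0 by exact continuous_poisson.
    rewrite (moment_ext _ _ (fun _ => 1)) by exact poisson_mul. apply moment_one_0.
  - rewrite cosh_inv_eq, sinh_inv_eq. simpl pow. field. split; nra.
  - exists (2 * PI * L * / (c - 1)). intro n.
    apply moment_bound; [exact hL | exact continuous_poisson |].
    intro t. pose proof (poisson_bounds t). rewrite Rabs_right; lra.
  - exists (2 * PI * L / s). intro n.
    pose proof (inv_exp_inv_pow_bounds n).
    assert (0 < 2 * PI * L / s) by (apply Rdiv_lt_0_compat; nra).
    rewrite Rabs_right; nra.
Qed.

Lemma moment_poisson_sq n :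
  moment L (fun t => poisson t ^ 2) (INR n) = 2 * PI * L / s ^ 2 * ((/ E) ^ n * (INR n + c / s)).
Proof.
  pose proof exp_inv_gt_1. pose proof sinh_inv_pos. pose proof cosh_inv_gt_1.
  pose proof inv_exp_inv_bounds. pose proof PI_RGT_0.
  assert (Hpoisson : forall t, poisson t ^ 2 * (c - cos (t / L)) = poisson t)
    by (intro t; transitivity (poisson t * (poisson t * (c - cos (t / L))));
        [ring | rewrite poisson_mul; ring]).
  revert n. apply (bounded_recurrence_unique c s cosh_sq_sub_sinh_sq sinh_inv_pos ltac:(lra)
    (fun n => moment L poisson (INR (S n))) (moment L poisson (INR 0))).
  - intro n. rewrite moment_recurrence_S by exact continuous_poisson_sq.
    apply moment_ext, Hpoisson.
  - intro n. rewrite moment_poisson, cosh_inv_eq, sinh_inv_eq, !S_INR. simpl pow. field. split; nra.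
  - rewrite moment_recurrence_0 by exact continuous_poisson_sq. apply moment_ext, Hpoisson.
  - rewrite moment_poisson, cosh_inv_eq, sinh_inv_eq. simpl INR. simpl pow. field. split; nra.
  - exists (2 * PI * L * (/ (c - 1)) ^ 2). intro n.
    apply moment_bound; [exact hL | exact continuous_poisson_sq |].
    intro t. pose proof (poisson_bounds t). rewrite Rabs_right by (apply Rle_ge, pow2_ge_0).
    apply pow_incr. lra.
  - exists (2 * PI * L / s ^ 2 * (/ E / (1 - / E) + c / s)). intro n.
    pose proof (inv_exp_inv_pow_bounds n). pose proof (INR_mul_pow_le (/ E) n inv_exp_inv_bounds).
    pose proof (pos_INR n).
    assert (0 < c / s) by (apply Rdiv_lt_0_compat; lra).
    assert (0 < 2 * PI * L / s ^ 2) by (apply Rdiv_lt_0_compat; [nra | apply pow_lt; lra]).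
    rewrite Rabs_mult, (Rabs_right (2 * PI * L / s ^ 2)), Rabs_right by nra.
    apply Rmult_le_compat_l; nra.
Qed.

Lemma chi_eq t : chi L t = (s ^ 2 * poisson t ^ 2 - c * poisson t) / (8 * PI ^ 2 * L ^ 2).
Proof.
  pose proof PI_RGT_0. pose proof sinh_inv_pos.
  unfold chi. rewrite c1_speed_eq, Gy1_eq. field. repeat split; lra.
Qed.

Lemma continuous_chi t : continuous (chi L) t.
Proof.
  apply (continuous_ext (fun t => (s ^ 2 * poisson t ^ 2 - c * poisson t) / (8 * PI ^ 2 * L ^ 2))).
  { intro. symmetry. apply chi_eq. }
  apply (@ex_derive_continuous R_AbsRing R_NormedModule).
  unfold poisson. pose proof (cosh_inv_sub_cos_pos t). auto_derive. lra.
Qed.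

Lemma fsin_chi_sub_const m n : fsin L (fun t => chi L t - m) n = 0.
Proof.
  unfold fsin. replace (- PI * L) with (- (PI * L)) by ring.
  rewrite RInt_odd; [ring | |].
  - intro t. apply (@continuous_mult R_UniformSpace R_AbsRing).
    + apply (continuous_minus (chi L) (fun _ => m));
        [apply continuous_chi | apply continuous_const].
    + apply (@ex_derive_continuous R_AbsRing R_NormedModule). auto_derive. exact I.
  - intro t. rewrite !chi_eq, poisson_opp.
    replace (INR n * - t / L) with (- (INR n * t / L)) by (unfold Rdiv; ring).
    rewrite sin_neg. ring.
Qed.

Lemma fcos_chi_sub_const m k :
  fcos L (fun t => chi L t - m) (S k) = INR (S k) * (/ E) ^ S k / (4 * PI ^ 2 * L ^ 2).
Proof.
  pose proof PI_RGT_0. pose proof sinh_inv_pos.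
  set (D := 8 * PI ^ 2 * L ^ 2).
  assert (HD : 0 < D)
    by (unfold D; pose proof (pow_lt L 2 hL); pose proof (pow_lt PI 2 PI_RGT_0); nra).
  unfold fcos. change (RInt _ _ _) with (moment L (fun t => chi L t - m) (INR (S k))).
  rewrite (moment_ext _ _ (fun t => s ^ 2 / D * poisson t ^ 2 + (- c / D) * poisson t + (- m) * 1))
    by (intro t; rewrite chi_eq; fold D; field; lra).
  rewrite moment_lin3
    by (exact continuous_poisson_sq || exact continuous_poisson || (intro; apply continuous_const)).
  rewrite moment_poisson_sq, moment_poisson, moment_one_S by exact hL.
  unfold D. field. repeat split; lra.
Qed.

End Green.

Theorem proposition6p2 (L g alpha2 : R) (hL : 0 < L) (hg : 0 < g) (ha : 0 < alpha2) :
  is_derive (fun y => Hext L 0 y) 0 (/ (4 * PI * L) * (cosh (1 / L) / sinh (1 / L))) /\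
  c1_speed L = - / (4 * PI * L) * (cosh (1 / L) / sinh (1 / L)) /\
  forall x : R,
    eta_star L g alpha2 x =
      - / (4 * PI ^ 2) *
        Series (fun n => INR n / (g * L ^ 2 + alpha2 * INR n ^ 2)
                         * exp (- INR n / L) * cos (INR n * x / L)).
Proof.
  split; [exact (is_derive_Hext L hL) |].
  split; [exact (c1_speed_eq L hL) |].
  intro x. unfold eta_star, invOp. cbv zeta.
  rewrite <- Ropp_mult_distr_l, <- Series_scal_l, <- !Series_opp. apply Series_ext.
  intros [| k]; simpl Nat.eqb.
  - simpl INR. unfold Rdiv. ring.
  - rewrite fcos_chi_sub_const, fsin_chi_sub_const, exp_opp_INR_div by exact hL.
    pose proof PI_RGT_0. pose proof (lt_0_INR (S k) (Nat.lt_0_succ k)).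
    assert (0 < g * L ^ 2 + alpha2 * INR (S k) ^ 2)
      by (pose proof (pow_lt L 2 hL); pose proof (pow_lt (INR (S k)) 2 ltac:(lra)); nra).
    field. repeat split; nra.
Qed.
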